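(* Let $f:\mathbb{R}^d\to\mathbb{R}$ be convex, symmetric and sign invariant, $g(w,x)=f_\sigma(wx^\top-\bar w\bar x^\top)$, $X=wx^\top-\bar w\bar x^\top$, $Y\in\partial f_\sigma(X)$, and let $U\in O(d_1)$, $V\in O(d_2)$ (columns $U_i,V_i$) satisfy $X=U\mathrm{diag}(\sigma(X))V^\top$ and $Y=U\mathrm{diag}(\sigma(Y))V^\top$, with $d_1,d_2\ge2$. Then (1) $\max\{|\sigma_1(Y)\langle V_1,x\rangle|,|\sigma_2(Y)\langle V_2,x\rangle|\}\le\|Yx\|$ and $\max\{|\sigma_1(Y)\langle U_1,w\rangle|,|\sigma_2(Y)\langle U_2,w\rangle|\}\le\|Y^\top w\|$; (2) $g(w,x)-g(\bar w,\bar x)\le\sigma_1(Y)\sigma_1(X)+\sigma_2(Y)\sigma_2(X)$.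
   Context: Let $d=\min\{d_1,d_2\}$ and let $\sigma:\mathbb{R}^{d_1\times d_2}\to\mathbb{R}^d_+$ give singular values in nonincreasing order. $f$ is symmetric if $f(\pi s)=f(s)$ for all permutation matrices $\pi$, sign invariant if $f(Ds)=f(s)$ for all diagonal $D$ with entries in $\{\pm1\}$; $f_\sigma=f\circ\sigma$, which is convex when $f$ is, and $\partial f_\sigma(X)$ is its convex subdifferential. $\mathrm{diag}(s)$ is the $d_1\times d_2$ matrix with $s$ on the main diagonal. $\bar w\in\mathbb{R}^{d_1}$, $\bar x\in\mathbb{R}^{d_2}$ are fixed. *)

From HB Require Import structures.
From mathcomp Require Import all_boot all_order all_algebra all_fingroup.
From Stdlib Require Import ClassicalEpsilon.
Set Implicit Arguments. Unset Strict Implicit. Unset Printing Implicit Defensive.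
Import Order.TTheory GRing.Theory Num.Theory.
Local Open Scope ring_scope.

Section Defs.
Variable R : rcfType.

Definition diagmx (d1 d2 : nat) (s : 'rV[R]_(minn d1 d2)) : 'M[R]_(d1, d2) :=
  \matrix_(i < d1, j < d2)
    (if nat_of_ord i == nat_of_ord j then
       oapp (fun k : 'I_(minn d1 d2) => s 0 k) 0 (insub (nat_of_ord i))
     else 0).

Definition orthogonal_mx (n : nat) (U : 'M[R]_n) : Prop := U^T *m U = 1%:M.

Definition nonneg_nonincr (d : nat) (s : 'rV[R]_d) : Prop :=
  (forall i, 0 <= s 0 i) /\ (forall i j : 'I_d, (i <= j)%N -> s 0 j <= s 0 i).

Definition is_svals (d1 d2 : nat) (X : 'M[R]_(d1, d2)) (s : 'rV[R]_(minn d1 d2))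
  : Prop :=
  nonneg_nonincr s /\
  exists (U : 'M[R]_d1) (V : 'M[R]_d2),
    orthogonal_mx U /\ orthogonal_mx V /\ X = U *m diagmx s *m V^T.

Definition sigma (d1 d2 : nat) (X : 'M[R]_(d1, d2)) : 'rV[R]_(minn d1 d2) :=
  epsilon (inhabits 0) (fun s => is_svals X s).

(* k-th singular value (0-based), 0 if out of range *)
Definition sv (d1 d2 : nat) (X : 'M[R]_(d1, d2)) (k : nat) : R :=
  oapp (fun i : 'I_(minn d1 d2) => sigma X 0 i) 0 (insub k).

Definition convex_fun (d : nat) (f : 'rV[R]_d -> R) : Prop :=
  forall (x y : 'rV[R]_d) (t : R), 0 <= t -> t <= 1 ->
    f (t *: x + (1 - t) *: y) <= t * f x + (1 - t) * f y.

Definition symmetric_fun (d : nat) (f : 'rV[R]_d -> R) : Prop :=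
  forall (p : 'S_d) (x : 'rV[R]_d), f (col_perm p x) = f x.

Definition sign_invariant (d : nat) (f : 'rV[R]_d -> R) : Prop :=
  forall (e : 'I_d -> bool) (x : 'rV[R]_d),
    f (\row_i ((-1) ^+ e i * x 0 i)) = f x.

Definition fsigma (d1 d2 : nat) (f : 'rV[R]_(minn d1 d2) -> R)
  (X : 'M[R]_(d1, d2)) : R := f (sigma X).

Definition frob (d1 d2 : nat) (A B : 'M[R]_(d1, d2)) : R :=
  \sum_(i < d1) \sum_(j < d2) A i j * B i j.

Definition subdiff (d1 d2 : nat) (F : 'M[R]_(d1, d2) -> R)
  (X Y : 'M[R]_(d1, d2)) : Prop :=
  forall Z : 'M[R]_(d1, d2), F X + frob Y (Z - X) <= F Z.

Definition vdot (n : nat) (a b : 'cV[R]_n) : R := \sum_(i < n) a i 0 * b i 0.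

Definition vnorm (n : nat) (a : 'cV[R]_n) : R := Num.sqrt (vdot a a).

(* <U_k, w>, U_k the k-th (0-based) column of U; 0 if out of range *)
Definition coldot (n : nat) (U : 'M[R]_n) (k : nat) (w : 'cV[R]_n) : R :=
  oapp (fun j : 'I_n => vdot (col j U) w) 0 (insub k).

Definition gfun (d1 d2 : nat) (f : 'rV[R]_(minn d1 d2) -> R)
  (wbar : 'cV[R]_d1) (xbar : 'cV[R]_d2) (w : 'cV[R]_d1) (x : 'cV[R]_d2) : R :=
  fsigma f (w *m x^T - wbar *m xbar^T).

End Defs.

From mathcomp Require Import all_boot all_order all_algebra all_fingroup.
From mathcomp Require Import lra.
From Stdlib Require Import ClassicalEpsilon.
Import Order.TTheory GRing.Theory Num.Theory.
Set Implicit Arguments. Unset Strict Implicit. Unset Printing Implicit Defensive.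
Local Open Scope ring_scope.

(* Both parts rest on the common SVD of X and Y. For (1), [Y x = U diag(σ(Y)) V^T x]
   and U is an isometry, so [σ_k(Y) <V_k, x>] is a coordinate of a vector of norm
   [||Y x||]. For (2), the subgradient inequality at [Z = 0] gives
   [f_σ(X) - f_σ(0) <= <Y, X> = Σ_k σ_k(Y) σ_k(X)], and X = w x^T - w̄ x̄^T has rank at
   most 2, so only the first two singular values of X can be nonzero. *)

Lemma insub_ord n k (lt_kn : (k < n)%N) : insub k = Some (Ordinal lt_kn) :> option 'I_n.
Proof. by rewrite insubT. Qed.

Lemma insub_ord_ge n k : (n <= k)%N -> insub k = None :> option 'I_n.
Proof. by move=> le_nk; rewrite insubF // ltnNge le_nk. Qed.

Section ExtendPerm.
Variables (d n : nat) (le_dn : (d <= n)%N).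

Definition extend_perm_fun (p : 'S_d) (i : 'I_n) : 'I_n :=
  if insub (val i) is Some k then widen_ord le_dn (p k) else i.

Lemma extend_perm_fun_lt p (i : 'I_n) (lt_id : (i < d)%N) :
  val (extend_perm_fun p i) = val (p (Ordinal lt_id)).
Proof. by rewrite /extend_perm_fun insub_ord. Qed.

Lemma extend_perm_fun_ge p (i : 'I_n) : (d <= i)%N -> extend_perm_fun p i = i.
Proof. by move=> le_di; rewrite /extend_perm_fun insub_ord_ge. Qed.

Lemma extend_perm_fun_ltE p (i : 'I_n) : (extend_perm_fun p i < d)%N = (i < d)%N.
Proof.
case: (ltnP i d) => [lt_id|le_di]; first by rewrite extend_perm_fun_lt ltn_ord.
by rewrite extend_perm_fun_ge // ltnNge le_di.
Qed.

Lemma extend_perm_fun_inj p : injective (extend_perm_fun p).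
Proof.
move=> i j eq_ij; have := extend_perm_fun_ltE p i; rewrite eq_ij extend_perm_fun_ltE.
case: (ltnP i d) => [lt_id|le_di].
  case: (ltnP j d) => // lt_jd _; move: eq_ij => /(congr1 val).
  rewrite !extend_perm_fun_lt => /val_inj/perm_inj.
  by move/(congr1 val) => /= /val_inj.
case: (ltnP j d) => // le_dj _.
by move: eq_ij; rewrite !extend_perm_fun_ge.
Qed.

Definition extend_perm p : 'S_n := perm (@extend_perm_fun_inj p).

End ExtendPerm.

Section SVD.
Variable R : rcfType.

Lemma orthogonal_mxM n (A B : 'M[R]_n) :
  orthogonal_mx A -> orthogonal_mx B -> orthogonal_mx (A *m B).
Proof. by move=> oA oB; rewrite /orthogonal_mx trmx_mul -mulmxA (mulmxA A^T) oA mul1mx. Qed.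

Lemma orthogonal_perm_mx n (p : 'S_n) : orthogonal_mx (perm_mx (R:=R) p).
Proof. by rewrite /orthogonal_mx tr_perm_mx -perm_mxM mulVg perm_mx1. Qed.

Lemma orthogonal_diag_mx n (c : 'rV[R]_n) :
  (forall i, c 0 i * c 0 i = 1) -> orthogonal_mx (diag_mx c).
Proof.
move=> c2; rewrite /orthogonal_mx tr_diag_mx mul_diag_mx.
by apply/matrixP => i j; rewrite !mxE; case: eqP => [->|_]; rewrite ?mulr1n ?mulr0n ?mulr0.
Qed.

Lemma diagmx_ord d1 d2 (a : 'rV[R]_(minn d1 d2)) (k : 'I_(minn d1 d2))
    (i : 'I_d1) (j : 'I_d2) :
  val i = val k -> val j = val k -> diagmx a i j = a 0 k.
Proof. by move=> ik jk; rewrite mxE ik jk eqxx valK. Qed.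

Lemma diagmx_neq d1 d2 (a : 'rV[R]_(minn d1 d2)) (i : 'I_d1) (j : 'I_d2) :
  val i != val j -> diagmx a i j = 0.
Proof. by rewrite mxE => /negbTE ->. Qed.

Lemma diagmx_ge d1 d2 (a : 'rV[R]_(minn d1 d2)) (i : 'I_d1) (j : 'I_d2) :
  (minn d1 d2 <= i)%N -> diagmx a i j = 0.
Proof. by move=> le_mi; rewrite mxE insub_ord_ge //= !if_same. Qed.

Lemma diagmx_perm d1 d2 (a : 'rV[R]_(minn d1 d2)) (p : 'S_(minn d1 d2)) :
  diagmx (\row_k a 0 (p k)) =
  row_perm (extend_perm (geq_minl d1 d2) p)
    (col_perm (extend_perm (geq_minr d1 d2) p) (diagmx a)).
Proof.
apply/matrixP => i j; rewrite [RHS]mxE [in RHS]mxE !permE.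
case: (ltnP i (minn d1 d2)) => [lt_im|le_mi]; last first.
  by rewrite !diagmx_ge ?extend_perm_fun_ge.
have [ij|ij] := eqVneq (val i) (val j).
  have lt_jm : (j < minn d1 d2)%N by rewrite -ij.
  rewrite (diagmx_ord _ (k := Ordinal lt_im)) // (diagmx_ord _ (k := p (Ordinal lt_im))).
  - by rewrite mxE.
  - exact: extend_perm_fun_lt.
  - by rewrite (extend_perm_fun_lt _ _ lt_jm); congr (val (p _)); apply: val_inj.
rewrite !diagmx_neq //; apply: contra ij.
case: (ltnP j (minn d1 d2)) => [lt_jm|le_mj].
  rewrite extend_perm_fun_lt (extend_perm_fun_lt _ _ lt_jm).
  by move=> /eqP/val_inj/perm_inj/(congr1 val) /= ->.
rewrite extend_perm_fun_lt (extend_perm_fun_ge _ _ le_mj) => /eqP ij'.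
by move: (ltn_ord (p (Ordinal lt_im))); rewrite ij' ltnNge le_mj.
Qed.

Lemma exists_sort_perm n (a : 'rV[R]_n) :
  exists p : 'S_n, forall i j : 'I_n, (i <= j)%N -> a 0 (p j) <= a 0 (p i).
Proof.
set t := [tuple a 0 k | k < n].
have [p sorted_t] := tuple_permP (permEl (perm_sort >=%R t)).
exists p => i j le_ij.
have tr_ge : transitive (>=%R : rel R) by move=> x y z xy yz; exact: le_trans yz xy.
have sorted_ge : sorted >=%R (sort >=%R t) by apply: sort_sorted => x y; exact: le_total.
have := sorted_leq_nth tr_ge (@lexx _ R) 0 sorted_ge.
rewrite size_sort size_tuple => /(_ i j (ltn_ord i) (ltn_ord j) le_ij).
rewrite sorted_t /= !(nth_map i) -?enumT ?size_enum_ord //.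
by rewrite !nth_ord_enum !tnth_mktuple.
Qed.

Lemma diagmx_sign_abs d1 d2 (s : 'rV[R]_(minn d1 d2)) :
  exists2 c : 'rV[R]_d1, (forall i, c 0 i * c 0 i = 1) &
    diagmx s = diag_mx c *m diagmx (\row_k `|s 0 k|).
Proof.
pose sgn (i : 'I_d1) : R :=
  if insub (val i) is Some k then (if s 0 k < 0 then -1 else 1) else 1.
exists (\row_i sgn i) => [i|].
  rewrite mxE /sgn; case: insub => [k|]; rewrite ?mulr1 //.
  by case: ifP; rewrite ?mulrNN mulr1.
rewrite mul_diag_mx; apply/matrixP => i j; rewrite !mxE /sgn.
case: (ltnP i (minn d1 d2)) => [lt_im|le_mi]; last by rewrite insub_ord_ge //= !if_same mulr0.
rewrite insub_ord /= mxE; case: eqP => _; rewrite ?mulr0 //.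
case: ltrP => [s_lt0|s_ge0]; first by rewrite ltr0_norm // mulN1r opprK.
by rewrite ger0_norm // mul1r.
Qed.

Lemma diagmx_sortE d1 d2 (a : 'rV[R]_(minn d1 d2)) (p : 'S_(minn d1 d2)) :
  diagmx a = perm_mx (extend_perm (geq_minl d1 d2) p)^-1 *m diagmx (\row_k a 0 (p k))
               *m perm_mx (extend_perm (geq_minr d1 d2) p).
Proof.
rewrite diagmx_perm row_permE col_permE !mulmxA -perm_mxM mulVg perm_mx1 mul1mx.
by rewrite -mulmxA -perm_mxM mulVg perm_mx1 mulmx1.
Qed.

(* [sigma] is a choice, so its properties are only available once some valid
   singular value vector is exhibited: signs go into U and sorting into permutations. *)
Lemma is_svals_exists d1 d2 (U : 'M[R]_d1) (V : 'M[R]_d2) (s : 'rV[R]_(minn d1 d2)) :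
  orthogonal_mx U -> orthogonal_mx V -> exists t, is_svals (U *m diagmx s *m V^T) t.
Proof.
move=> oU oV; have [c c2 ->] := diagmx_sign_abs s.
set a := \row_k `|s 0 k|; have [p sorted_p] := exists_sort_perm a.
rewrite (diagmx_sortE a p); exists (\row_k a 0 (p k)); split.
  split=> [i|i j le_ij]; rewrite !mxE ?normr_ge0 //.
  by have := sorted_p i j le_ij; rewrite !mxE.
set q1 := extend_perm _ p; set q2 := extend_perm _ p.
exists (U *m diag_mx c *m perm_mx q1^-1), (V *m perm_mx q2^-1); split; [|split].
- apply: orthogonal_mxM; last exact: orthogonal_perm_mx.
  by apply: orthogonal_mxM => //; exact: orthogonal_diag_mx.
- by apply: orthogonal_mxM => //; exact: orthogonal_perm_mx.
by rewrite trmx_mul tr_perm_mx invgK !mulmxA.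
Qed.

Lemma sigma_nonneg_nonincr d1 d2 (X : 'M[R]_(d1, d2)) U V (s : 'rV[R]_(minn d1 d2)) :
  orthogonal_mx U -> orthogonal_mx V -> X = U *m diagmx s *m V^T ->
  nonneg_nonincr (sigma X).
Proof.
move=> oU oV ->; rewrite /sigma.
by case: (epsilon_spec (inhabits 0) _ (is_svals_exists s oU oV)).
Qed.

Lemma frobE d1 d2 (A B : 'M[R]_(d1, d2)) : frob A B = \tr (A^T *m B).
Proof.
rewrite /frob /mxtrace exchange_big; apply: eq_bigr => j _; rewrite mxE.
by apply: eq_bigr => i _; rewrite mxE.
Qed.

Lemma frobN d1 d2 (A B : 'M[R]_(d1, d2)) : frob A (- B) = - frob A B.
Proof. by rewrite !frobE mulmxN linearN. Qed.

Lemma frob_orthogonal d1 d2 (U : 'M[R]_d1) (V : 'M[R]_d2) (A B : 'M[R]_(d1, d2)) :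
  orthogonal_mx U -> orthogonal_mx V ->
  frob (U *m A *m V^T) (U *m B *m V^T) = frob A B.
Proof.
move=> oU oV; rewrite !frobE !trmx_mul trmxK -!mulmxA (mulmxA U^T) oU mul1mx.
by rewrite mxtrace_mulC -!mulmxA oV mulmx1.
Qed.

Lemma frob_diagmx d1 d2 (a b : 'rV[R]_(minn d1 d2)) :
  frob (diagmx a) (diagmx b) = \sum_(k < minn d1 d2) a 0 k * b 0 k.
Proof.
pose F k := if insub k is Some k' then a 0 k' * b 0 k' else 0 : R.
have -> : \sum_(k < minn d1 d2) a 0 k * b 0 k = \sum_(k < minn d1 d2) F k.
  by apply: eq_bigr => k _; rewrite /F valK.
rewrite (big_ord_widen d1 F (geq_minl d1 d2)) big_mkcond /frob; apply: eq_bigr => i _.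
case: ltnP => [lt_im|le_mi]; last by rewrite big1 // => j _; rewrite diagmx_ge ?mul0r.
have lt_i2 : (i < d2)%N := leq_trans lt_im (geq_minr d1 d2).
rewrite (bigD1 (Ordinal lt_i2)) //= big1 ?addr0 => [|j ne_ji].
  by rewrite /F insub_ord !(diagmx_ord _ (k := Ordinal lt_im)).
by rewrite diagmx_neq ?mul0r //; apply: contra ne_ji => /eqP ij; apply/eqP/val_inj.
Qed.

Lemma subdiff_sub0_le d1 d2 (F : 'M[R]_(d1, d2) -> R) (X Y : 'M[R]_(d1, d2)) :
  subdiff F X Y -> F X - F 0 <= frob Y X.
Proof. by move=> /(_ 0); rewrite sub0r frobN => sub_ineq; lra. Qed.

Lemma mulmx_coord_single m n (D : 'M[R]_(m, n)) (z : 'cV[R]_n) i j :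
  (forall j', j' != j -> D i j' = 0) -> (D *m z) i 0 = D i j * z j 0.
Proof.
by move=> Dij; rewrite mxE (bigD1 j) //= big1 ?addr0 // => j' /Dij ->; rewrite mul0r.
Qed.

Lemma mulmx_diagmx_coord d1 d2 (a : 'rV[R]_(minn d1 d2)) (z : 'cV[R]_d2)
    (k : 'I_(minn d1 d2)) (i : 'I_d1) (j : 'I_d2) :
  val i = val k -> val j = val k -> (diagmx a *m z) i 0 = a 0 k * z j 0.
Proof.
move=> ik jk; rewrite (mulmx_coord_single _ (j := j)) ?(diagmx_ord _ ik jk) // => j' ne_j'j.
by rewrite diagmx_neq // ik -jk; apply: contra ne_j'j => /eqP jj'; apply/eqP/val_inj.
Qed.

Lemma trmx_diagmx_mulmx_coord d1 d2 (a : 'rV[R]_(minn d1 d2)) (z : 'cV[R]_d1)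
    (k : 'I_(minn d1 d2)) (i : 'I_d1) (j : 'I_d2) :
  val i = val k -> val j = val k -> ((diagmx a)^T *m z) j 0 = a 0 k * z i 0.
Proof.
move=> ik jk; rewrite (mulmx_coord_single _ (j := i)) => [|i' ne_i'i].
  by rewrite mxE (diagmx_ord _ ik jk).
by rewrite mxE diagmx_neq // jk -ik; apply: contra ne_i'i => /eqP ii'; apply/eqP/val_inj.
Qed.

Lemma vdotE n (a b : 'cV[R]_n) : vdot a b = (a^T *m b) 0 0.
Proof. by rewrite /vdot mxE; apply: eq_bigr => i _; rewrite mxE. Qed.

Lemma vnorm_orthogonal n (U : 'M[R]_n) (y : 'cV[R]_n) :
  orthogonal_mx U -> vnorm (U *m y) = vnorm y.
Proof. by move=> oU; rewrite /vnorm !vdotE trmx_mul -mulmxA (mulmxA U^T) oU mul1mx. Qed.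

Lemma normr_coord_le_vnorm n (u : 'cV[R]_n) i : `|u i 0| <= vnorm u.
Proof.
have sqr_sum_ge0 (P : pred 'I_n) : 0 <= \sum_(j | P j) u j 0 * u j 0.
  by apply: sumr_ge0 => j _; rewrite -expr2 sqr_ge0.
rewrite /vnorm /vdot -sqrtr_sqr ler_sqrt; last exact: sqr_sum_ge0.
by rewrite (bigD1 i) //= expr2 lerDl.
Qed.

Lemma coldot_ord n (U : 'M[R]_n) k (w : 'cV[R]_n) (lt_kn : (k < n)%N) :
  coldot U k w = (U^T *m w) (Ordinal lt_kn) 0.
Proof. by rewrite /coldot insub_ord /= vdotE tr_col -row_mul mxE. Qed.

Lemma sv_ord d1 d2 (X : 'M[R]_(d1, d2)) k (lt_km : (k < minn d1 d2)%N) :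
  sv X k = sigma X 0 (Ordinal lt_km).
Proof. by rewrite /sv insub_ord. Qed.

Lemma sv_ge d1 d2 (X : 'M[R]_(d1, d2)) k : (minn d1 d2 <= k)%N -> sv X k = 0.
Proof. by move=> le_mk; rewrite /sv insub_ord_ge. Qed.

Lemma sv_coldot_le_vnorm d1 d2 (Y : 'M[R]_(d1, d2)) U V (x : 'cV[R]_d2) k :
  orthogonal_mx U -> Y = U *m diagmx (sigma Y) *m V^T ->
  `|sv Y k * coldot V k x| <= vnorm (Y *m x).
Proof.
move=> oU eY; case: (ltnP k (minn d1 d2)) => [lt_km|le_mk]; last first.
  by rewrite sv_ge // mul0r normr0 sqrtr_ge0.
have lt_k1 : (k < d1)%N := leq_trans lt_km (geq_minl d1 d2).
have lt_k2 : (k < d2)%N := leq_trans lt_km (geq_minr d1 d2).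
rewrite [in Y *m x]eY -!mulmxA vnorm_orthogonal // (sv_ord _ lt_km) (coldot_ord _ _ lt_k2).
rewrite -(mulmx_diagmx_coord _ _ (k := Ordinal lt_km) (i := Ordinal lt_k1)
                                  (j := Ordinal lt_k2) erefl erefl).
exact: normr_coord_le_vnorm.
Qed.

Lemma sv_coldot_le_vnorm_tr d1 d2 (Y : 'M[R]_(d1, d2)) U V (w : 'cV[R]_d1) k :
  orthogonal_mx V -> Y = U *m diagmx (sigma Y) *m V^T ->
  `|sv Y k * coldot U k w| <= vnorm (Y^T *m w).
Proof.
move=> oV eY; case: (ltnP k (minn d1 d2)) => [lt_km|le_mk]; last first.
  by rewrite sv_ge // mul0r normr0 sqrtr_ge0.
have lt_k1 : (k < d1)%N := leq_trans lt_km (geq_minl d1 d2).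
have lt_k2 : (k < d2)%N := leq_trans lt_km (geq_minr d1 d2).
rewrite [in Y^T *m w]eY !trmx_mul trmxK -!mulmxA vnorm_orthogonal //.
rewrite (sv_ord _ lt_km) (coldot_ord _ _ lt_k1).
rewrite -(trmx_diagmx_mulmx_coord _ _ (k := Ordinal lt_km) (i := Ordinal lt_k1)
                                  (j := Ordinal lt_k2) erefl erefl).
exact: normr_coord_le_vnorm.
Qed.

Lemma mxrank_mxsub m n m' n' (f : 'I_m' -> 'I_m) (g : 'I_n' -> 'I_n) (A : 'M[R]_(m, n)) :
  (\rank (mxsub f g A) <= \rank A)%N.
Proof.
have -> : mxsub f g A = rowsub f 1%:M *m (A *m colsub g 1%:M).
  by rewrite mulmx_colsub mulmx1 mul_rowsub_mx mul1mx mxsubrc.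
exact: leq_trans (mxrankM_maxr _ _) (mxrankM_maxl _ _).
Qed.

Lemma mxrank_outer_sub m n (w w' : 'cV[R]_m) (x x' : 'cV[R]_n) :
  (\rank (w *m x^T - w' *m x'^T)%R <= 2)%N.
Proof.
have rank_outer (u : 'cV[R]_m) (v : 'cV[R]_n) : (\rank (u *m v^T) <= 1)%N.
  exact: leq_trans (mxrankM_maxl _ _) (rank_leq_col _).
apply: leq_trans (mxrank_add _ _) _; rewrite mxrank_opp.
exact: leq_add (rank_outer w x) (rank_outer w' x').
Qed.

(* The principal [r.+1]-minor of [diagmx b] is invertible unless [b_r = 0]. *)
Lemma nonincr_diagmx_rank_eq0 d1 d2 (b : 'rV[R]_(minn d1 d2)) r :
  nonneg_nonincr b -> (\rank (diagmx b) <= r)%N ->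
  forall k : 'I_(minn d1 d2), (r <= k)%N -> b 0 k = 0.
Proof.
move=> [b_ge0 b_nonincr] rank_b k le_rk.
have lt_rm : (r < minn d1 d2)%N := leq_ltn_trans le_rk (ltn_ord k).
suff br0 : b 0 (Ordinal lt_rm) = 0.
  by apply/le_anti; rewrite b_ge0 andbT -br0 b_nonincr.
apply/eqP; apply: contraTT rank_b => br_neq0; rewrite -ltnNge.
have br_gt0 : 0 < b 0 (Ordinal lt_rm) by rewrite lt_def br_neq0 b_ge0.
have le_r1 : (r.+1 <= d1)%N := leq_trans lt_rm (geq_minl d1 d2).
have le_r2 : (r.+1 <= d2)%N := leq_trans lt_rm (geq_minr d1 d2).
have minor_diag : mxsub (widen_ord le_r1) (widen_ord le_r2) (diagmx b) =
                  diag_mx (\row_i b 0 (widen_ord lt_rm i)).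
  apply/matrixP => i j; have [<-|ne_ij] := eqVneq i j.
    by rewrite [LHS]mxE (diagmx_ord _ (k := widen_ord lt_rm i)) // !mxE eqxx mulr1n.
  by rewrite [LHS]mxE diagmx_neq // [RHS]mxE (negbTE ne_ij) mulr0n.
apply: leq_trans (mxrank_mxsub (widen_ord le_r1) (widen_ord le_r2) _).
rewrite minor_diag mxrank_unit // unitmxE det_diag unitfE gt_eqF //.
apply: prodr_gt0 => i _; rewrite mxE (lt_le_trans br_gt0) // b_nonincr //=.
by rewrite -ltnS ltn_ord.
Qed.

Lemma sigma_rank_eq0 d1 d2 (X : 'M[R]_(d1, d2)) U V r :
  orthogonal_mx U -> orthogonal_mx V -> X = U *m diagmx (sigma X) *m V^T ->
  (\rank X <= r)%N -> forall k : 'I_(minn d1 d2), (r <= k)%N -> sigma X 0 k = 0.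
Proof.
move=> oU oV eX rank_X; apply: nonincr_diagmx_rank_eq0.
  exact: sigma_nonneg_nonincr oU oV eX.
have -> : diagmx (sigma X) = U^T *m X *m V.
  by rewrite [in RHS]eX !mulmxA oU mul1mx -mulmxA oV mulmx1.
exact: leq_trans (mxrankM_maxl _ _) (leq_trans (mxrankM_maxr _ _) rank_X).
Qed.

Lemma frob_sv_rank2 d1 d2 (X Y : 'M[R]_(d1, d2)) U V :
  (1 < minn d1 d2)%N -> orthogonal_mx U -> orthogonal_mx V ->
  X = U *m diagmx (sigma X) *m V^T -> Y = U *m diagmx (sigma Y) *m V^T ->
  (\rank X <= 2)%N -> frob Y X = sv Y 0 * sv X 0 + sv Y 1 * sv X 1.
Proof.
move=> lt_1m oU oV eX eY rank_X.
have lt_0m : (0 < minn d1 d2)%N := ltnW lt_1m.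
rewrite [in LHS]eY [in LHS]eX frob_orthogonal // frob_diagmx.
rewrite (bigD1 (Ordinal lt_0m)) // (bigD1 (Ordinal lt_1m)) //= big1 ?addr0 ?addrA.
  by rewrite !(sv_ord _ lt_0m) !(sv_ord _ lt_1m).
move=> k /andP [ne_k0 ne_k1]; rewrite (sigma_rank_eq0 oU oV eX rank_X) ?mulr0 //.
by case: k ne_k0 ne_k1 => [[|[|k]] lt_km].
Qed.

End SVD.

Theorem lemmaB2 (R : rcfType) (d1 d2 : nat) (hd1 : (1 < d1)%N) (hd2 : (1 < d2)%N)
  (f : 'rV[R]_(minn d1 d2) -> R)
  (hconv : convex_fun f) (hsym : symmetric_fun f) (hsign : sign_invariant f)
  (wbar w : 'cV[R]_d1) (xbar x : 'cV[R]_d2)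
  (Y : 'M[R]_(d1, d2)) (U : 'M[R]_d1) (V : 'M[R]_d2)
  (hY : subdiff (fsigma f) (w *m x^T - wbar *m xbar^T) Y)
  (hU : orthogonal_mx U) (hV : orthogonal_mx V)
  (hX : w *m x^T - wbar *m xbar^T = U *m diagmx (sigma (w *m x^T - wbar *m xbar^T)) *m V^T)
  (hYsvd : Y = U *m diagmx (sigma Y) *m V^T) :
  let X := w *m x^T - wbar *m xbar^T in
  (Num.max `|sv Y 0 * coldot V 0 x| `|sv Y 1 * coldot V 1 x| <= vnorm (Y *m x) /\
   Num.max `|sv Y 0 * coldot U 0 w| `|sv Y 1 * coldot U 1 w| <= vnorm (Y^T *m w)) /\
  gfun f wbar xbar w x - gfun f wbar xbar wbar xbar <= sv Y 0 * sv X 0 + sv Y 1 * sv X 1.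
Proof.
move=> X; split.
  split; rewrite ge_max.
    by rewrite !(sv_coldot_le_vnorm _ _ hU hYsvd).
  by rewrite !(sv_coldot_le_vnorm_tr _ _ hV hYsvd).
have lt_1m : (1 < minn d1 d2)%N by rewrite leq_min hd1 hd2.
rewrite /gfun subrr -(frob_sv_rank2 lt_1m hU hV hX hYsvd (mxrank_outer_sub _ _ _ _)).
exact: subdiff_sub0_le hY.
Qed.
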